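(* Let $p(x)=\frac1{\sqrt{2\pi}}e^{-x^2/2}$ be the density of $N(0,1)$ on $\mathbb{R}$. There exists an absolute constant $C$ such that for every $\varepsilon>0$ there exists a probability density $q$ on $\mathbb{R}$ such that (1) $\ln q$ is $C$-smooth (i.e. $(\ln q)'$ is $C$-Lipschitz); (2) $\mathbb{E}_p\big[|(\ln p)'(x)-(\ln q)'(x)|^2\big]<\varepsilon$; (3) $\mathrm{TV}(p,q)>1-\varepsilon$. *)

From Stdlib Require Import Reals.
From Coquelicot Require Import Coquelicot.
Open Scope R_scope.

Definition gauss (x : R) : R := / sqrt (2 * PI) * exp (- (x ^ 2) / 2).

Definition is_RInt_R (f : R -> R) (v : R) : Prop :=
  is_RInt_gen f (Rbar_locally m_infty) (Rbar_locally p_infty) v.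

Definition is_prob_density (q : R -> R) : Prop :=
  (forall x, 0 <= q x) /\ is_RInt_R q 1.

Definition score (q : R -> R) (x : R) : R := Derive (fun y => ln (q y)) x.

Definition log_smooth (C : R) (q : R -> R) : Prop :=
  (forall x, 0 < q x) /\
  (forall x, ex_derive (fun y => ln (q y)) x) /\
  (forall x y, Rabs (score q x - score q y) <= C * Rabs (x - y)).

Definition tv_is (p q : R -> R) (t : R) : Prop :=
  exists v, is_RInt_R (fun x => Rabs (p x - q x)) v /\ t = v / 2.

Definition score_div_is (p q : R -> R) (t : R) : Prop :=
  is_RInt_R (fun x => p x * (score p x - score q x) ^ 2) t.

(* Let q be proportional to exp l_M with
     l_M x = - x^2 / 2 + (x - M)_+^2 - (x - 4M)_+^2.
   Its score - x + 2 (x - M)_+ - 2 (x - 4M)_+ is 5-Lipschitz and coincides with the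
   Gaussian score - x on (-oo, M], so the score divergence only sees the Gaussian tail
   beyond M and is O(1/M).  On [4M, +oo), l_M x = 3 M^2 - (x - 6M)^2 / 2, so q has a
   Gaussian bump of height exp (3 M^2) around 6M holding all but an exponentially small
   part of its mass, while N(0,1) gives mass O(1/M) to [M, +oo); hence
   TV(p, q) >= 1 - O(1/M).  Taking M of order 1/eps gives the theorem with C = 5.

   Improper integrals of nonnegative continuous functions are obtained as suprema of
   their integrals over compact intervals. *)

From Stdlib Require Import Reals Lra Psatz Classical FunctionalExtensionality.
From Coquelicot Require Import Coquelicot.
Open Scope R_scope.

Ltac continuous_by_derive :=
  apply (@ex_derive_continuous R_AbsRing R_NormedModule); auto_derive; auto.

Section ContinuousIntegrals.

Implicit Types (f g : R -> R) (a b c k : R).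

Lemma continuous_Rmult f g x :
  continuous f x -> continuous g x -> continuous (fun y => f y * g y) x.
Proof. exact (@continuous_mult R_UniformSpace R_AbsRing f g x). Qed.

Lemma continuous_Rplus f g x :
  continuous f x -> continuous g x -> continuous (fun y => f y + g y) x.
Proof. exact (@continuous_plus R_UniformSpace R_AbsRing R_NormedModule f g x). Qed.

Lemma continuous_Rminus f g x :
  continuous f x -> continuous g x -> continuous (fun y => f y - g y) x.
Proof. exact (@continuous_minus R_UniformSpace R_AbsRing R_NormedModule f g x). Qed.

Lemma continuous_Lipschitz f L :
  (forall x y, Rabs (f x - f y) <= L * Rabs (x - y)) -> forall x, continuous f x.
Proof.
  intros Hf x. apply continuity_pt_filterlim.
  intros eps Heps. set (L' := Rabs L + 1).
  assert (HL' : 1 <= L') by (unfold L'; pose proof (Rabs_pos L); lra).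
  exists (eps / L'). split; [apply Rdiv_lt_0_compat; lra|].
  intros y [_ Hy]. simpl in *. unfold R_dist in *.
  apply Rle_lt_trans with (L' * Rabs (y - x)).
  - eapply Rle_trans; [apply Hf|].
    apply Rmult_le_compat_r; [apply Rabs_pos|unfold L'; pose proof (Rle_abs L); lra].
  - apply (Rmult_lt_compat_l L') in Hy; [|lra].
    replace (L' * (eps / L')) with eps in Hy by (field; lra). exact Hy.
Qed.

Lemma RInt_Rconst c a b : RInt (fun _ => c) a b = c * (b - a).
Proof. rewrite RInt_const. unfold scal; simpl; unfold mult; simpl. ring. Qed.

Variables f g : R -> R.
Hypothesis f_cont : forall x, continuous f x.
Hypothesis g_cont : forall x, continuous g x.

Lemma ex_RInt_continuous_R a b : ex_RInt f a b.
Proof. apply (@ex_RInt_continuous R_CompleteNormedModule); auto. Qed.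

Let g_ex a b : ex_RInt g a b.
Proof. apply (@ex_RInt_continuous R_CompleteNormedModule); auto. Qed.

Lemma RInt_Chasles_R a b c : RInt f a b + RInt f b c = RInt f a c.
Proof.
  exact (RInt_Chasles (V := R_CompleteNormedModule) f a b c
           (ex_RInt_continuous_R a b) (ex_RInt_continuous_R b c)).
Qed.

Lemma RInt_Rscal k a b : RInt (fun x => k * f x) a b = k * RInt f a b.
Proof. exact (RInt_scal (V := R_CompleteNormedModule) f a b k (ex_RInt_continuous_R a b)). Qed.

Lemma RInt_Rplus a b : RInt (fun x => f x + g x) a b = RInt f a b + RInt g a b.
Proof.
  exact (RInt_plus (V := R_CompleteNormedModule) f g a b (ex_RInt_continuous_R a b) (g_ex a b)).
Qed.

Lemma RInt_Rminus a b : RInt (fun x => f x - g x) a b = RInt f a b - RInt g a b.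
Proof.
  exact (RInt_minus (V := R_CompleteNormedModule) f g a b (ex_RInt_continuous_R a b) (g_ex a b)).
Qed.

Lemma RInt_le_R a b :
  a <= b -> (forall x, a <= x <= b -> f x <= g x) -> RInt f a b <= RInt g a b.
Proof.
  intros Hab H. apply RInt_le; [exact Hab|apply ex_RInt_continuous_R|apply g_ex|].
  intros x [H1 H2]; apply H; lra.
Qed.

Lemma RInt_shift c a b : RInt (fun x => f (x - c)) a b = RInt f (a - c) (b - c).
Proof.
  pose proof (RInt_comp_lin (V := R_CompleteNormedModule) f 1 (- c) a b
                (ex_RInt_continuous_R _ _)) as E.
  unfold scal, mult in E; simpl in E. unfold mult in E; simpl in E.
  replace (1 * a + - c) with (a - c) in E by ring.
  replace (1 * b + - c) with (b - c) in E by ring.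
  rewrite <- E. apply RInt_ext. intros x _.
  rewrite !Rmult_1_l. now replace (x + - c) with (x - c) by ring.
Qed.

Hypothesis f_nonneg : forall x, 0 <= f x.

Lemma RInt_ge0_R a b : a <= b -> 0 <= RInt f a b.
Proof. intros Hab. apply RInt_ge_0; auto. apply ex_RInt_continuous_R. Qed.

Lemma RInt_le_superinterval a0 b0 a b :
  a <= a0 -> a0 <= b0 -> b0 <= b -> RInt f a0 b0 <= RInt f a b.
Proof.
  intros H1 H2 H3.
  rewrite <- (RInt_Chasles_R a a0 b), <- (RInt_Chasles_R a0 b0 b).
  pose proof (RInt_ge0_R a a0 H1). pose proof (RInt_ge0_R b0 b H3). lra.
Qed.

End ContinuousIntegrals.

Definition is_RInt_sup (f : R -> R) (l : R) : Prop :=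
  is_lub (fun y => exists a b, a <= b /\ y = RInt f a b) l.

Section ImproperIntegrals.

Variable f : R -> R.
Variable l : R.
Hypothesis f_sup : is_RInt_sup f l.

Lemma RInt_le_sup a b : a <= b -> RInt f a b <= l.
Proof. intros Hab. apply (proj1 f_sup). now exists a, b. Qed.

Lemma sup_le_RInt_bound B : (forall a b, a <= b -> RInt f a b <= B) -> l <= B.
Proof. intros HB. apply (proj2 f_sup). intros y [a [b [Hab ->]]]. auto. Qed.

Lemma RInt_sup_approx d : 0 < d -> exists a b, a <= b /\ l - d < RInt f a b.
Proof.
  intros Hd. apply NNPP. intros Hn.
  enough (l <= l - d) by lra.
  apply sup_le_RInt_bound. intros a b Hab.
  apply Rnot_lt_le. intros Hlt. apply Hn. now exists a, b.
Qed.

Hypothesis f_cont : forall x, continuous f x.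
Hypothesis f_nonneg : forall x, 0 <= f x.

Lemma is_RInt_R_sup : is_RInt_R f l.
Proof.
  intros P [eps Heps].
  destruct (RInt_sup_approx eps (cond_pos eps)) as [a0 [b0 [Hab0 Hl0]]].
  exists (fun a => a < a0) (fun b => b0 < b); [now exists a0|now exists b0|].
  intros a b Ha Hb; simpl in Ha, Hb. exists (RInt f a b). split.
  - apply (@RInt_correct R_CompleteNormedModule), ex_RInt_continuous_R, f_cont.
  - apply Heps. change (Rabs (RInt f a b - l) < eps). apply Rabs_def1.
    + assert (Hab : a <= b) by lra.
      pose proof (RInt_le_sup a b Hab). pose proof (cond_pos eps). lra.
    + pose proof (RInt_le_superinterval f f_cont f_nonneg a0 b0 a b). lra.
Qed.

Lemma RInt_sup_approx_around a1 b1 d :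
  a1 <= b1 -> 0 < d -> exists a b, a <= a1 /\ b1 <= b /\ l - d < RInt f a b.
Proof.
  intros Hab1 Hd. destruct (RInt_sup_approx d Hd) as [a0 [b0 [Hab0 Hl0]]].
  exists (Rmin a0 a1), (Rmax b0 b1).
  pose proof (Rmin_l a0 a1). pose proof (Rmin_r a0 a1).
  pose proof (Rmax_l b0 b1). pose proof (Rmax_r b0 b1).
  split; [lra|split; [lra|]].
  pose proof (RInt_le_superinterval f f_cont f_nonneg a0 b0 (Rmin a0 a1) (Rmax b0 b1)). lra.
Qed.

End ImproperIntegrals.

Lemma ex_RInt_sup (f : R -> R) B :
  (forall a b, a <= b -> RInt f a b <= B) -> exists l, is_RInt_sup f l.
Proof.
  intros HB. destruct (completeness (fun y => exists a b, a <= b /\ y = RInt f a b)) as [l Hl].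
  - exists B. intros y [a [b [Hab ->]]]. auto.
  - exists (RInt f 0 0), 0, 0. split; [lra|reflexivity].
  - now exists l.
Qed.

Lemma is_RInt_sup_scal (f : R -> R) k l :
  (forall x, continuous f x) -> 0 < k -> is_RInt_sup f l ->
  is_RInt_sup (fun x => k * f x) (k * l).
Proof.
  intros Hf Hk Hl. split.
  - intros y [a [b [Hab ->]]]. rewrite RInt_Rscal by exact Hf.
    apply Rmult_le_compat_l; [lra|]. now apply (RInt_le_sup f l Hl).
  - intros B HB. apply (Rmult_le_reg_l (/ k)); [now apply Rinv_0_lt_compat|].
    rewrite <- Rmult_assoc, Rinv_l, Rmult_1_l by lra.
    apply (sup_le_RInt_bound f l Hl). intros a b Hab.
    apply (Rmult_le_reg_l k); [exact Hk|].
    rewrite <- Rmult_assoc, Rinv_r, Rmult_1_l by lra.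
    rewrite <- RInt_Rscal by exact Hf. apply HB. now exists a, b.
Qed.

Lemma RInt_abs_sub_ge (p q : R -> R) m a b :
  (forall x, continuous p x) -> (forall x, continuous q x) -> a <= m <= b ->
  RInt p a b + RInt q a b - 2 * (RInt q a m + RInt p m b)
    <= RInt (fun x => Rabs (p x - q x)) a b.
Proof.
  intros pc qc Hm.
  assert (kc : forall x, continuous (fun y => Rabs (p y - q y)) x)
    by (intros; apply continuous_Rabs_comp, continuous_Rminus; auto).
  assert (pqc : forall x, continuous (fun y => p y - q y) x)
    by (intros; apply continuous_Rminus; auto).
  assert (qpc : forall x, continuous (fun y => q y - p y) x)
    by (intros; apply continuous_Rminus; auto).
  assert (Hleft : RInt p a m - RInt q a m <= RInt (fun x => Rabs (p x - q x)) a m).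
  { rewrite <- RInt_Rminus by auto. apply RInt_le_R; auto; [lra|].
    intros x _. apply Rle_abs. }
  assert (Hright : RInt q m b - RInt p m b <= RInt (fun x => Rabs (p x - q x)) m b).
  { rewrite <- RInt_Rminus by auto. apply RInt_le_R; auto; [lra|].
    intros x _. rewrite Rabs_minus_sym. apply Rle_abs. }
  pose proof (RInt_Chasles_R p pc a m b). pose proof (RInt_Chasles_R q qc a m b).
  pose proof (RInt_Chasles_R _ kc a m b). simpl in *.
  lra.
Qed.

Lemma tv_ge_of_separated (p q : R -> R) m alpha beta :
  (forall x, continuous p x) -> (forall x, continuous q x) ->
  (forall x, 0 <= p x) -> (forall x, 0 <= q x) ->
  is_RInt_sup p 1 -> is_RInt_sup q 1 ->
  (forall a, a <= m -> RInt q a m <= alpha) ->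
  (forall b, m <= b -> RInt p m b <= beta) ->
  exists t, tv_is p q t /\ 1 - alpha - beta <= t.
Proof.
  intros pc qc p0 q0 p1 q1 q_left p_right.
  set (k := fun x => Rabs (p x - q x)).
  assert (kc : forall x, continuous k x)
    by (intros; apply continuous_Rabs_comp, continuous_Rminus; auto).
  destruct (ex_RInt_sup k 2) as [v Hv].
  { intros a b Hab.
    apply Rle_trans with (RInt (fun x => p x + q x) a b).
    - apply RInt_le_R; auto; [intros; apply continuous_Rplus; auto|].
      intros x _. unfold k. apply Rabs_le. pose proof (p0 x); pose proof (q0 x); lra.
    - rewrite RInt_Rplus by auto.
      pose proof (RInt_le_sup p 1 p1 a b Hab). pose proof (RInt_le_sup q 1 q1 a b Hab). lra. }
  exists (v / 2). split.
  { exists v. split; [|reflexivity].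
    apply is_RInt_R_sup; auto. intros; apply Rabs_pos. }
  enough (2 - 2 * alpha - 2 * beta <= v) by lra.
  apply Rle_plus_epsilon. intros d Hd.
  destruct (RInt_sup_approx_around p 1 p1 pc p0 m m (d / 2)) as [a0 [b0 [Ha0 [Hb0 Hp]]]];
    [lra|lra|].
  destruct (RInt_sup_approx_around q 1 q1 qc q0 a0 b0 (d / 2)) as [a [b [Ha [Hb Hq]]]];
    [lra|lra|].
  pose proof (RInt_le_superinterval p pc p0 a0 b0 a b Ha ltac:(lra) Hb).
  pose proof (RInt_abs_sub_ge p q m a b pc qc ltac:(lra)).
  pose proof (RInt_le_sup k v Hv a b ltac:(lra)).
  pose proof (q_left a ltac:(lra)). pose proof (p_right b ltac:(lra)).
  unfold k in *. lra.
Qed.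

Lemma exp_le_compat a b : a <= b -> exp a <= exp b.
Proof. intros [H|H]; [now apply Rlt_le, exp_increasing|rewrite H; lra]. Qed.

Lemma sqrt_2PI_bounds : 1 <= sqrt (2 * PI) <= 3.
Proof.
  pose proof PI2_3_2. pose proof PI_4. split.
  - rewrite <- sqrt_1. apply sqrt_le_1_alt. lra.
  - replace 3 with (sqrt (3 * 3)) by (rewrite sqrt_square; lra). apply sqrt_le_1_alt. lra.
Qed.

Definition gauss_kernel (x : R) : R := exp (- (x ^ 2) / 2).

Lemma gauss_kernel_pos x : 0 < gauss_kernel x.
Proof. apply exp_pos. Qed.

Lemma gauss_kernel_continuous x : continuous gauss_kernel x.
Proof. unfold gauss_kernel. continuous_by_derive. Qed.

Lemma gauss_kernel_le_inv x : 1 <= x -> gauss_kernel x <= / x.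
Proof.
  intros Hx. unfold gauss_kernel.
  replace (- (x ^ 2) / 2) with (- (x ^ 2 / 2)) by field. rewrite exp_Ropp.
  apply Rinv_le_contravar; [lra|].
  pose proof (exp_ineq1_le (x ^ 2 / 2)). nra.
Qed.

Definition gauss_prim (x : R) : R := RInt gauss_kernel 0 x.

(* The classical evaluation of the Gaussian integral: [gauss_prim ^ 2 + 2 * gauss_param_int]
   is constant, by differentiation under the integral sign. *)
Definition gauss_param (x t : R) : R := exp (- (x ^ 2 * (1 + t ^ 2)) / 2) / (1 + t ^ 2).

Definition gauss_param_int (x : R) : R := RInt (gauss_param x) 0 1.

Lemma gauss_prim_derive x : is_derive gauss_prim x (gauss_kernel x).
Proof.
  apply (is_derive_RInt gauss_kernel gauss_prim 0 x).
  - exists (mkposreal 1 Rlt_0_1). intros y _.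
    apply (@RInt_correct R_CompleteNormedModule), ex_RInt_continuous_R, gauss_kernel_continuous.
  - apply gauss_kernel_continuous.
Qed.

Lemma gauss_param_derive x t :
  is_derive (fun y => gauss_param y t) x (- x * exp (- (x ^ 2 * (1 + t ^ 2)) / 2)).
Proof.
  pose proof (pow2_ge_0 t).
  unfold gauss_param. auto_derive; [lra|].
  replace (- (x * (x * 1) * (1 + t * (t * 1))) * / 2) with (- (x ^ 2 * (1 + t ^ 2)) / 2) by field.
  field. lra.
Qed.

Lemma gauss_param_continuous x t : continuous (gauss_param x) t.
Proof. pose proof (pow2_ge_0 t). unfold gauss_param. continuous_by_derive. lra. Qed.

Lemma gauss_param_derive_continuous x t :
  continuity_2d_pt (fun y s => Derive (fun z => gauss_param z s) y) x t.
Proof.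
  apply continuity_2d_pt_ext with
    (fun y s => (-1 * y) * exp ((-1/2) * ((y * y) * (1 + s * s)))).
  { intros y s.
    assert (D : Derive (fun z => gauss_param z s) y = - y * exp (- (y ^ 2 * (1 + s ^ 2)) / 2))
      by apply is_derive_unique, gauss_param_derive.
    rewrite D.
    replace (-1/2 * (y * y * (1 + s * s))) with (- (y ^ 2 * (1 + s ^ 2)) / 2) by field. ring. }
  apply continuity_2d_pt_mult.
  - apply continuity_2d_pt_mult; [apply continuity_2d_pt_const|apply continuity_2d_pt_id1].
  - apply continuity_1d_2d_pt_comp with (f := exp)
      (g := fun y s => (-1/2) * ((y * y) * (1 + s * s))).
    + apply derivable_continuous_pt, derivable_pt_exp.
    + repeat first [ apply continuity_2d_pt_mult | apply continuity_2d_pt_plus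
                   | apply continuity_2d_pt_const | apply continuity_2d_pt_id1
                   | apply continuity_2d_pt_id2 ].
Qed.

Lemma gauss_param_int_derive x : is_derive gauss_param_int x (- gauss_kernel x * gauss_prim x).
Proof.
  assert (H : is_derive gauss_param_int x
                (RInt (fun t => Derive (fun y => gauss_param y t) x) 0 1)).
  { apply (is_derive_RInt_param gauss_param 0 1 x).
    - exists (mkposreal 1 Rlt_0_1). intros y _ t _. eexists. apply gauss_param_derive.
    - intros t _. apply gauss_param_derive_continuous.
    - exists (mkposreal 1 Rlt_0_1). intros y _.
      apply ex_RInt_continuous_R, gauss_param_continuous. }
  replace (- gauss_kernel x * gauss_prim x)
    with (RInt (fun t => Derive (fun y => gauss_param y t) x) 0 1); [exact H|].
  rewrite (RInt_ext _ (fun t => (- gauss_kernel x) * (x * gauss_kernel (x * t + 0)))).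
  2:{ intros t _.
      assert (D : Derive (fun y => gauss_param y t) x = - x * exp (- (x ^ 2 * (1 + t ^ 2)) / 2))
        by apply is_derive_unique, gauss_param_derive.
      rewrite D. unfold gauss_kernel.
      replace (- (x ^ 2 * (1 + t ^ 2)) / 2) with (- (x ^ 2) / 2 + - ((x * t + 0) ^ 2) / 2) by field.
      rewrite exp_plus. change (- x * (exp (- (x ^ 2) / 2) * exp (- ((x * t + 0) ^ 2) / 2))
        = - exp (- (x ^ 2) / 2) * (x * exp (- ((x * t + 0) ^ 2) / 2))). ring. }
  assert (Hc : forall y, continuous (fun t => x * gauss_kernel (x * t + 0)) y)
    by (intros; unfold gauss_kernel; continuous_by_derive).
  transitivity (- gauss_kernel x * RInt (fun t => x * gauss_kernel (x * t + 0)) 0 1);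
    [exact (RInt_Rscal _ Hc _ 0 1)|].
  pose proof (RInt_comp_lin (V := R_CompleteNormedModule) gauss_kernel x 0 0 1
                (ex_RInt_continuous_R _ gauss_kernel_continuous _ _)) as E.
  unfold scal, mult in E; simpl in E. unfold mult in E; simpl in E.
  rewrite E, Rmult_0_r, Rmult_1_r, !Rplus_0_r. reflexivity.
Qed.

Lemma gauss_prim_sq_param_derive x :
  is_derive (fun y => gauss_prim y * gauss_prim y + 2 * gauss_param_int y) x 0.
Proof.
  pose proof (is_derive_mult _ _ _ _ _ (gauss_prim_derive x) (gauss_prim_derive x) Rmult_comm)
    as D1.
  assert (D2 : is_derive (fun y => 2 * gauss_param_int y) x (2 * (- gauss_kernel x * gauss_prim x)))
    by apply is_derive_scal, gauss_param_int_derive.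
  replace 0 with (plus (plus (mult (gauss_kernel x) (gauss_prim x))
                             (mult (gauss_prim x) (gauss_kernel x)))
                       (2 * (- gauss_kernel x * gauss_prim x)))
    by (unfold plus, mult; simpl; unfold mult; simpl; ring).
  exact (is_derive_plus _ _ _ _ _ D1 D2).
Qed.

Lemma gauss_param_int_0 : gauss_param_int 0 = PI / 4.
Proof.
  unfold gauss_param_int. rewrite (RInt_ext _ (fun t => / (1 + t ^ 2))).
  2:{ intros t _. unfold gauss_param.
      replace (- (0 ^ 2 * (1 + t ^ 2)) / 2) with 0 by field. rewrite exp_0.
      unfold Rdiv. apply Rmult_1_l. }
  assert (Hatan : is_RInt (fun t => / (1 + t ^ 2)) 0 1 (minus (atan 1) (atan 0))).
  { apply (is_RInt_derive atan).
    - intros y _. apply is_derive_Reals, derivable_pt_lim_atan.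
    - intros y _. pose proof (pow2_ge_0 y). continuous_by_derive. lra. }
  rewrite (is_RInt_unique _ _ _ _ Hatan). unfold minus, plus, opp; simpl.
  rewrite atan_1, atan_0. ring.
Qed.

Lemma gauss_prim_sq x : gauss_prim x * gauss_prim x = PI / 2 - 2 * gauss_param_int x.
Proof.
  pose proof (is_RInt_derive _ (fun _ => 0) 0 x (fun y _ => gauss_prim_sq_param_derive y)
                (fun y _ => continuous_const 0 y)) as H.
  apply is_RInt_unique in H. rewrite RInt_Rconst in H.
  unfold minus, plus, opp in H; simpl in H.
  unfold gauss_prim in H at 3 4. rewrite RInt_point, gauss_param_int_0 in H.
  unfold zero in H; simpl in H. lra.
Qed.

Lemma gauss_param_int_bounds x : 0 <= gauss_param_int x <= gauss_kernel x.
Proof.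
  assert (Hp : forall t, 0 <= t -> 0 <= gauss_param x t <= gauss_kernel x).
  { intros t Ht. pose proof (pow2_ge_0 t). pose proof (pow2_ge_0 x).
    pose proof (exp_pos (- (x ^ 2 * (1 + t ^ 2)) / 2)).
    unfold gauss_param, gauss_kernel. split.
    - apply Rle_mult_inv_pos; lra.
    - apply Rle_trans with (exp (- (x ^ 2 * (1 + t ^ 2)) / 2)).
      + unfold Rdiv. rewrite <- (Rmult_1_r (exp _)) at 2.
        apply Rmult_le_compat_l; [lra|]. rewrite <- Rinv_1. apply Rinv_le_contravar; lra.
      + apply exp_le_compat. pose proof (Rmult_le_pos _ _ (pow2_ge_0 x) (pow2_ge_0 t)). nra. }
  unfold gauss_param_int. split.
  - apply RInt_ge_0; [lra|apply ex_RInt_continuous_R, gauss_param_continuous|].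
    intros t Ht. apply Hp. lra.
  - apply Rle_trans with (RInt (fun _ => gauss_kernel x) 0 1).
    + apply RInt_le_R; [apply gauss_param_continuous|intros; apply continuous_const|lra|].
      intros t Ht. apply Hp. lra.
    + rewrite RInt_Rconst. lra.
Qed.

Lemma RInt_gauss_kernel_sym c : RInt gauss_kernel (- c) c = 2 * gauss_prim c.
Proof.
  unfold gauss_prim.
  rewrite <- (RInt_Chasles_R _ gauss_kernel_continuous (- c) 0 c).
  enough (RInt gauss_kernel (- c) 0 = RInt gauss_kernel 0 c) by lra.
  pose proof (RInt_comp_lin (V := R_CompleteNormedModule) gauss_kernel (-1) 0 0 c
                (ex_RInt_continuous_R _ gauss_kernel_continuous _ _)) as E.
  unfold scal, mult in E; simpl in E. unfold mult in E; simpl in E.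
  replace (-1 * 0 + 0) with 0 in E by ring. replace (-1 * c + 0) with (- c) in E by ring.
  rewrite <- opp_RInt_swap, <- E by apply ex_RInt_continuous_R, gauss_kernel_continuous.
  rewrite (RInt_ext _ (fun y => -1 * gauss_kernel y)).
  - rewrite (RInt_Rscal _ gauss_kernel_continuous). unfold opp; simpl. ring.
  - intros y _. unfold gauss_kernel. f_equal. f_equal. f_equal. ring.
Qed.

Lemma gauss_prim_ge0 c : 0 <= c -> 0 <= gauss_prim c.
Proof.
  intros Hc. apply RInt_ge0_R; auto using gauss_kernel_continuous.
  intros; apply Rlt_le, gauss_kernel_pos.
Qed.

Lemma two_gauss_prim_sq c :
  (2 * gauss_prim c) ^ 2 = sqrt (2 * PI) ^ 2 - 8 * gauss_param_int c.
Proof.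
  replace (sqrt (2 * PI) ^ 2) with (2 * PI)
    by (rewrite <- Rsqr_pow2, Rsqr_sqrt; [reflexivity|pose proof PI_RGT_0; lra]).
  pose proof (gauss_prim_sq c). nra.
Qed.

Lemma RInt_gauss_kernel_le a b : a <= b -> RInt gauss_kernel a b <= sqrt (2 * PI).
Proof.
  intros Hab. set (c := Rabs a + Rabs b).
  pose proof (Rle_abs a). pose proof (Rle_abs (- a)). pose proof (Rle_abs b).
  pose proof (Rabs_pos a). pose proof (Rabs_pos b). rewrite Rabs_Ropp in *.
  apply Rle_trans with (RInt gauss_kernel (- c) c).
  { apply RInt_le_superinterval; unfold c; try lra; auto using gauss_kernel_continuous.
    intros; apply Rlt_le, gauss_kernel_pos. }
  rewrite RInt_gauss_kernel_sym.
  pose proof (two_gauss_prim_sq c). pose proof (gauss_param_int_bounds c).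
  pose proof (gauss_prim_ge0 c ltac:(unfold c; lra)). pose proof sqrt_2PI_bounds.
  nra.
Qed.

Lemma RInt_gauss_kernel_central c :
  0 <= c -> sqrt (2 * PI) - 8 * gauss_kernel c <= RInt gauss_kernel (- c) c.
Proof.
  intros Hc. rewrite RInt_gauss_kernel_sym.
  pose proof (two_gauss_prim_sq c). pose proof (gauss_param_int_bounds c).
  assert (0 <= 2 * gauss_prim c) by (pose proof (gauss_prim_ge0 c Hc); lra).
  pose proof sqrt_2PI_bounds.
  set (S := sqrt (2 * PI)) in *. set (y := 2 * gauss_prim c) in *.
  destruct (Rle_lt_dec S y); [pose proof (gauss_kernel_pos c); lra|].
  assert ((S - y) * (S + y - 1) >= 0) by (apply Rle_ge, Rmult_le_pos; lra).
  nra.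
Qed.

Lemma gauss_continuous x : continuous gauss x.
Proof. unfold gauss. continuous_by_derive. Qed.

Lemma inv_sqrt_2PI_bounds : 0 < / sqrt (2 * PI) <= 1.
Proof.
  pose proof sqrt_2PI_bounds. split; [apply Rinv_0_lt_compat; lra|].
  rewrite <- Rinv_1. apply Rinv_le_contravar; lra.
Qed.

Lemma gauss_pos x : 0 < gauss x.
Proof. apply Rmult_lt_0_compat; [apply inv_sqrt_2PI_bounds|apply exp_pos]. Qed.

Lemma gauss_le_kernel x : gauss x <= gauss_kernel x.
Proof.
  pose proof inv_sqrt_2PI_bounds. pose proof (gauss_kernel_pos x).
  unfold gauss. fold (gauss_kernel x). nra.
Qed.

Lemma RInt_gauss a b : RInt gauss a b = / sqrt (2 * PI) * RInt gauss_kernel a b.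
Proof. exact (RInt_Rscal _ gauss_kernel_continuous _ a b). Qed.

Lemma RInt_gauss_central c : 0 <= c -> 1 - 8 * gauss_kernel c <= RInt gauss (- c) c.
Proof.
  intros Hc. rewrite RInt_gauss. pose proof inv_sqrt_2PI_bounds. pose proof sqrt_2PI_bounds.
  pose proof (RInt_gauss_kernel_central c Hc). pose proof (gauss_kernel_pos c).
  apply Rle_trans with (/ sqrt (2 * PI) * (sqrt (2 * PI) - 8 * gauss_kernel c)).
  - rewrite Rmult_minus_distr_l, Rinv_l by lra. nra.
  - apply Rmult_le_compat_l; lra.
Qed.

Lemma gauss_RInt_sup : is_RInt_sup gauss 1.
Proof.
  split.
  - intros y [a [b [Hab ->]]]. rewrite RInt_gauss. pose proof sqrt_2PI_bounds.
    pose proof (RInt_gauss_kernel_le a b Hab).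
    replace 1 with (/ sqrt (2 * PI) * sqrt (2 * PI)) by (field; lra).
    apply Rmult_le_compat_l; [apply Rlt_le, Rinv_0_lt_compat|]; lra.
  - intros B HB. apply Rle_plus_epsilon. intros d Hd.
    set (c := 8 / d + 1).
    assert (Hc : 1 <= c) by (unfold c; pose proof (Rdiv_lt_0_compat 8 d ltac:(lra) Hd); lra).
    assert (Hker : 8 * gauss_kernel c <= d).
    { pose proof (gauss_kernel_le_inv c Hc).
      enough (8 * / c <= d) by lra.
      apply (Rmult_le_reg_r c); [lra|]. rewrite Rmult_assoc, Rinv_l by lra.
      unfold c. replace (d * (8 / d + 1)) with (8 + d) by (field; lra). lra. }
    pose proof (RInt_gauss_central c ltac:(lra)).
    assert (RInt gauss (- c) c <= B) by (apply HB; exists (- c), c; split; [lra|reflexivity]).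
    lra.
Qed.

Lemma score_gauss x : score gauss x = - x.
Proof.
  unfold score. pose proof sqrt_2PI_bounds.
  assert (HS : 0 < / sqrt (2 * PI)) by (apply Rinv_0_lt_compat; lra).
  rewrite (Derive_ext _ (fun y => ln (/ sqrt (2 * PI)) + - (y ^ 2) / 2)).
  - apply is_derive_unique. auto_derive; auto. field.
  - intros t. unfold gauss. rewrite ln_mult, ln_exp; auto. apply exp_pos.
Qed.

Definition pos_part (y : R) : R := (y + Rabs y) / 2.

Lemma pos_part_of_nonneg y : 0 <= y -> pos_part y = y.
Proof. intros; unfold pos_part; rewrite Rabs_pos_eq; lra. Qed.

Lemma pos_part_of_nonpos y : y <= 0 -> pos_part y = 0.
Proof. intros; unfold pos_part; rewrite Rabs_left1; lra. Qed.

Lemma pos_part_bounds y : 0 <= pos_part y /\ y <= pos_part y.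
Proof.
  destruct (Rle_dec 0 y).
  - rewrite pos_part_of_nonneg; lra.
  - rewrite pos_part_of_nonpos; lra.
Qed.

Lemma pos_part_Lipschitz a b : Rabs (pos_part a - pos_part b) <= Rabs (a - b).
Proof.
  unfold pos_part. pose proof (Rabs_triang_inv a b). pose proof (Rabs_triang_inv b a).
  rewrite (Rabs_minus_sym b a) in *. apply Rabs_le.
  destruct (Rle_dec 0 (a - b)).
  - rewrite (Rabs_pos_eq (a - b)) in * by lra. lra.
  - rewrite (Rabs_left1 (a - b)) in * by lra. lra.
Qed.

Lemma pos_part_sq_derive y : is_derive (fun z => pos_part z ^ 2) y (2 * pos_part y).
Proof.
  destruct (Rtotal_order y 0) as [Hy|[->|Hy]].
  - rewrite (pos_part_of_nonpos y) by lra.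
    apply is_derive_ext_loc with (fun _ => 0).
    + exists (mkposreal (- y) ltac:(lra)). intros z Hz.
      change (Rabs (z - y) < - y) in Hz. apply Rabs_def2 in Hz.
      rewrite pos_part_of_nonpos by lra. simpl; ring.
    + auto_derive; auto; ring.
  - rewrite pos_part_of_nonpos by lra. apply is_derive_Reals.
    intros eps Heps. exists (mkposreal eps Heps). intros h Hh0 Hh. simpl in Hh.
    rewrite Rplus_0_l, (pos_part_of_nonpos 0), Rmult_0_r by lra.
    destruct (Rle_dec 0 h).
    + rewrite pos_part_of_nonneg, Rabs_pos_eq in * by lra.
      replace ((h ^ 2 - 0 ^ 2) / h - 0) with h by (field; auto). rewrite Rabs_pos_eq; lra.
    + rewrite pos_part_of_nonpos by lra.
      replace ((0 ^ 2 - 0 ^ 2) / h - 0) with 0 by (field; auto). rewrite Rabs_R0; lra.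
  - rewrite (pos_part_of_nonneg y) by lra.
    apply is_derive_ext_loc with (fun z => z ^ 2).
    + exists (mkposreal y ltac:(lra)). intros z Hz.
      change (Rabs (z - y) < y) in Hz. apply Rabs_def2 in Hz.
      rewrite pos_part_of_nonneg by lra. reflexivity.
    + auto_derive; auto. ring.
Qed.

Lemma pos_part_shift_sq_derive c x :
  is_derive (fun z => pos_part (z - c) ^ 2) x (2 * pos_part (x - c)).
Proof.
  assert (D : is_derive (fun z : R => z - c) x 1) by (auto_derive; auto; ring).
  pose proof (is_derive_comp _ _ x _ _ (pos_part_sq_derive (x - c)) D) as H.
  unfold scal in H; simpl in H. unfold mult in H; simpl in H.
  rewrite Rmult_1_l in H. exact H.
Qed.

Definition tilt_log (M x : R) : R :=
  - (x ^ 2) / 2 + pos_part (x - M) ^ 2 - pos_part (x - 4 * M) ^ 2.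

Definition tilt_score (M x : R) : R :=
  - x + 2 * pos_part (x - M) - 2 * pos_part (x - 4 * M).

Definition tilt (M x : R) : R := exp (tilt_log M x).

Lemma tilt_log_derive M x : is_derive (tilt_log M) x (tilt_score M x).
Proof.
  assert (D : is_derive (fun y : R => - (y ^ 2) / 2) x (- x)) by (auto_derive; auto; field).
  pose proof (is_derive_minus _ _ _ _ _
                (is_derive_plus _ _ _ _ _ D (pos_part_shift_sq_derive M x))
                (pos_part_shift_sq_derive (4 * M) x)) as H.
  replace (tilt_score M x)
    with (minus (plus (- x) (2 * pos_part (x - M))) (2 * pos_part (x - 4 * M)))
    by (unfold tilt_score, minus, plus, opp; simpl; ring).
  eapply is_derive_ext; [|exact H].
  intros t. unfold tilt_log, minus, plus, opp; simpl. ring.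
Qed.

Lemma tilt_score_Lipschitz M x y : Rabs (tilt_score M x - tilt_score M y) <= 5 * Rabs (x - y).
Proof.
  pose proof (pos_part_Lipschitz (x - M) (y - M)) as H1.
  pose proof (pos_part_Lipschitz (x - 4 * M) (y - 4 * M)) as H2.
  replace (x - M - (y - M)) with (x - y) in H1 by ring.
  replace (x - 4 * M - (y - 4 * M)) with (x - y) in H2 by ring.
  unfold tilt_score.
  replace (- x + 2 * pos_part (x - M) - 2 * pos_part (x - 4 * M)
           - (- y + 2 * pos_part (y - M) - 2 * pos_part (y - 4 * M)))
    with (- (x - y) + 2 * (pos_part (x - M) - pos_part (y - M))
          - 2 * (pos_part (x - 4 * M) - pos_part (y - 4 * M))) by ring.
  apply Rabs_le_between in H1, H2.
  pose proof (proj1 (Rabs_le_between (x - y) (Rabs (x - y))) (Rle_refl _)).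
  apply Rabs_le. lra.
Qed.

Lemma tilt_continuous M x : continuous (tilt M) x.
Proof.
  apply continuous_exp_comp, (@ex_derive_continuous R_AbsRing R_NormedModule).
  eexists. apply tilt_log_derive.
Qed.

Lemma tilt_pos M x : 0 < tilt M x.
Proof. apply exp_pos. Qed.

Section TiltPieces.

Variable M : R.
Hypothesis M_ge0 : 0 <= M.

Lemma tilt_log_left x : x <= M -> tilt_log M x = - (x ^ 2) / 2.
Proof. intros. unfold tilt_log. rewrite !pos_part_of_nonpos by lra. field. Qed.

Lemma tilt_log_mid x : M <= x <= 4 * M -> tilt_log M x = (x - 2 * M) ^ 2 / 2 - M ^ 2.
Proof.
  intros. unfold tilt_log. rewrite pos_part_of_nonneg, pos_part_of_nonpos by lra. field.
Qed.

Lemma tilt_log_right x : 4 * M <= x -> tilt_log M x = 3 * M ^ 2 - (x - 6 * M) ^ 2 / 2.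
Proof. intros. unfold tilt_log. rewrite !pos_part_of_nonneg by lra. field. Qed.

Lemma RInt_tilt_left a : a <= M -> RInt (tilt M) a M <= sqrt (2 * PI).
Proof.
  intros Ha. rewrite (RInt_ext _ gauss_kernel); [now apply RInt_gauss_kernel_le|].
  intros x Hx. rewrite Rmin_left, Rmax_right in Hx by lra.
  unfold tilt. rewrite tilt_log_left by lra. reflexivity.
Qed.

Lemma RInt_tilt_mid : RInt (tilt M) M (4 * M) <= 3 * M * exp (M ^ 2).
Proof.
  apply Rle_trans with (RInt (fun _ => exp (M ^ 2)) M (4 * M)).
  - apply RInt_le_R; [apply tilt_continuous|intros; apply continuous_const|lra|].
    intros x Hx. unfold tilt. rewrite tilt_log_mid by lra. apply exp_le_compat. nra.
  - rewrite RInt_Rconst. lra.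
Qed.

Lemma RInt_tilt_right b :
  4 * M <= b -> RInt (tilt M) (4 * M) b <= exp (3 * M ^ 2) * sqrt (2 * PI).
Proof.
  intros Hb.
  rewrite (RInt_ext _ (fun x => exp (3 * M ^ 2) * gauss_kernel (x - 6 * M))).
  - rewrite RInt_Rscal by (intros; unfold gauss_kernel; continuous_by_derive).
    rewrite RInt_shift by exact gauss_kernel_continuous.
    apply Rmult_le_compat_l; [apply Rlt_le, exp_pos|]. apply RInt_gauss_kernel_le. lra.
  - intros x Hx. rewrite Rmin_left, Rmax_right in Hx by lra.
    unfold tilt, gauss_kernel. rewrite tilt_log_right, <- exp_plus by lra. f_equal. field.
Qed.

Lemma RInt_tilt_bounded a b : a <= b ->
  RInt (tilt M) a b <= sqrt (2 * PI) + 3 * M * exp (M ^ 2) + exp (3 * M ^ 2) * sqrt (2 * PI).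
Proof.
  intros Hab. set (a' := Rmin a M). set (b' := Rmax b (4 * M)).
  pose proof (Rmin_l a M). pose proof (Rmin_r a M).
  pose proof (Rmax_l b (4 * M)). pose proof (Rmax_r b (4 * M)).
  apply Rle_trans with (RInt (tilt M) a' b').
  { apply RInt_le_superinterval; unfold a', b' in *; try lra.
    - apply tilt_continuous.
    - intros; apply Rlt_le, tilt_pos. }
  rewrite <- (RInt_Chasles_R _ (tilt_continuous M) a' M b').
  rewrite <- (RInt_Chasles_R _ (tilt_continuous M) M (4 * M) b').
  pose proof (RInt_tilt_left a' ltac:(unfold a'; lra)). pose proof RInt_tilt_mid.
  pose proof (RInt_tilt_right b' ltac:(unfold b'; lra)).
  lra.
Qed.

Lemma RInt_tilt_peak : exp (3 * M ^ 2 - 1 / 2) <= RInt (tilt M) (6 * M) (6 * M + 1).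
Proof.
  apply Rle_trans with (RInt (fun _ => exp (3 * M ^ 2 - 1 / 2)) (6 * M) (6 * M + 1)).
  - rewrite RInt_Rconst. lra.
  - apply RInt_le_R; [intros; apply continuous_const|apply tilt_continuous|lra|].
    intros x Hx. unfold tilt. rewrite tilt_log_right by lra. apply exp_le_compat. nra.
Qed.

End TiltPieces.

Definition score_gap_density (M x : R) : R := gauss x * (- x - tilt_score M x) ^ 2.

Lemma score_gap_density_continuous M x : continuous (score_gap_density M) x.
Proof.
  set (u := fun y => - y - tilt_score M y).
  assert (u_cont : forall y, continuous u y).
  { apply (continuous_Lipschitz _ 6). intros y z. unfold u.
    pose proof (tilt_score_Lipschitz M y z).
    replace (- y - tilt_score M y - (- z - tilt_score M z))
      with (- (y - z) - (tilt_score M y - tilt_score M z)) by ring.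
    eapply Rle_trans; [apply Rabs_triang|]. rewrite !Rabs_Ropp. lra. }
  apply continuous_Rmult; [apply gauss_continuous|].
  apply (continuous_ext (fun y => u y * u y)).
  { intros y. change (u y * u y = u y ^ 2). ring. }
  apply continuous_Rmult; apply u_cont.
Qed.

Lemma score_gap_density_nonneg M x : 0 <= score_gap_density M x.
Proof. apply Rmult_le_pos; [apply Rlt_le, gauss_pos|apply pow2_ge_0]. Qed.

Lemma score_gap_left M x : 0 <= M -> x <= M -> - x - tilt_score M x = 0.
Proof. intros. unfold tilt_score. rewrite !pos_part_of_nonpos by lra. ring. Qed.

Lemma score_gap_sq_le M x : 1 <= M <= x -> (- x - tilt_score M x) ^ 2 <= 4 * x ^ 3.
Proof.
  intros [HM Hx]. unfold tilt_score. rewrite (pos_part_of_nonneg (x - M)) by lra.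
  assert (pos_part (x - 4 * M) <= x - M).
  { destruct (Rle_dec (x - 4 * M) 0).
    - rewrite pos_part_of_nonpos; lra.
    - rewrite pos_part_of_nonneg; lra. }
  destruct (pos_part_bounds (x - 4 * M)).
  replace (- x - (- x + 2 * (x - M) - 2 * pos_part (x - 4 * M)))
    with (-2 * (x - M - pos_part (x - 4 * M))) by ring.
  assert (x ^ 2 <= x ^ 3) by (simpl; nra).
  assert (Hw : 0 <= x - M - pos_part (x - 4 * M) <= x) by lra.
  assert ((x - M - pos_part (x - 4 * M)) ^ 2 <= x ^ 2)
    by (apply pow_maj_Rabs; rewrite Rabs_pos_eq; lra).
  nra.
Qed.

Lemma RInt_cubic_gauss_tail a b :
  a <= b -> RInt (fun x => 4 * x ^ 3 * gauss_kernel x) a b <= 4 * (a ^ 2 + 2) * gauss_kernel a.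
Proof.
  intros Hab. set (H := fun x => - 4 * (x ^ 2 + 2) * gauss_kernel x).
  assert (HI : is_RInt (fun x => 4 * x ^ 3 * gauss_kernel x) a b (minus (H b) (H a))).
  { apply (is_RInt_derive H).
    - intros x _. unfold H, gauss_kernel. auto_derive; auto.
      replace (- (x * (x * 1)) * / 2) with (- (x ^ 2) / 2) by field. field.
    - intros x _. unfold gauss_kernel. continuous_by_derive. }
  rewrite (is_RInt_unique _ _ _ _ HI). unfold minus, plus, opp, H; simpl.
  pose proof (gauss_kernel_pos b). pose proof (pow2_ge_0 b).
  pose proof (Rmult_le_pos (4 * (b ^ 2 + 2)) (gauss_kernel b) ltac:(lra) ltac:(lra)).
  lra.
Qed.

Lemma RInt_score_gap_density_le M a b :
  1 <= M -> a <= b -> RInt (score_gap_density M) a b <= 4 * (M ^ 2 + 2) * gauss_kernel M.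
Proof.
  intros HM Hab. set (a' := Rmin a M). set (b' := Rmax b M).
  pose proof (Rmin_l a M). pose proof (Rmin_r a M).
  pose proof (Rmax_l b M). pose proof (Rmax_r b M).
  apply Rle_trans with (RInt (score_gap_density M) a' b').
  { apply RInt_le_superinterval; unfold a', b' in *; try lra.
    - apply score_gap_density_continuous.
    - apply score_gap_density_nonneg. }
  rewrite <- (RInt_Chasles_R _ (score_gap_density_continuous M) a' M b').
  rewrite (RInt_ext _ (fun _ => 0) a' M), RInt_Rconst, Rmult_0_l, Rplus_0_l.
  2:{ intros x Hx. rewrite Rmin_left, Rmax_right in Hx by (unfold a' in *; lra).
      unfold score_gap_density. rewrite score_gap_left by lra. change (gauss x * 0 ^ 2 = 0). ring. }
  eapply Rle_trans; [|apply (RInt_cubic_gauss_tail M b'); unfold b'; lra].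
  apply RInt_le_R; [apply score_gap_density_continuous| |unfold b'; lra|].
  { intros; unfold gauss_kernel; continuous_by_derive. }
  intros x Hx. unfold score_gap_density.
  pose proof (score_gap_sq_le M x ltac:(lra)). pose proof (pow2_ge_0 (- x - tilt_score M x)).
  pose proof (gauss_le_kernel x). pose proof (gauss_pos x).
  replace (4 * x ^ 3 * gauss_kernel x) with (gauss_kernel x * (4 * x ^ 3)) by ring.
  apply Rmult_le_compat; lra.
Qed.

Lemma cubic_gauss_tail_le M : 1 <= M -> 4 * (M ^ 2 + 2) * gauss_kernel M <= 64 / M.
Proof.
  intros HM. unfold gauss_kernel.
  replace (- (M ^ 2) / 2) with (- (M ^ 2 / 4) + - (M ^ 2 / 4)) by field.
  rewrite exp_plus, exp_Ropp.
  pose proof (exp_ineq1_le (M ^ 2 / 4)). pose proof (exp_pos (M ^ 2 / 4)).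
  set (E := exp (M ^ 2 / 4)) in *.
  apply (Rmult_le_reg_r (M * E * E)); [apply Rmult_lt_0_compat; [apply Rmult_lt_0_compat|]; lra|].
  replace (4 * (M ^ 2 + 2) * (/ E * / E) * (M * E * E)) with (4 * (M ^ 2 + 2) * M) by (field; lra).
  replace (64 / M * (M * E * E)) with (64 * (E * E)) by (field; lra).
  assert ((1 + M ^ 2 / 4) * (1 + M ^ 2 / 4) <= E * E)
    by (apply Rmult_le_compat; pose proof (pow2_ge_0 M); lra).
  simpl in *. nra.
Qed.

Definition tilted (M Z x : R) : R := / Z * tilt M x.

Section TiltedDensity.

Variables M Z : R.
Hypothesis M_ge1 : 1 <= M.
Hypothesis Z_sup : is_RInt_sup (tilt M) Z.

Lemma normalizer_ge : exp (3 * M ^ 2 - 1 / 2) <= Z.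
Proof.
  eapply Rle_trans; [apply RInt_tilt_peak; lra|].
  apply (RInt_le_sup _ _ Z_sup). lra.
Qed.

Lemma normalizer_pos : 0 < Z.
Proof. pose proof normalizer_ge. pose proof (exp_pos (3 * M ^ 2 - 1 / 2)). lra. Qed.

Lemma sqrt_2PI_div_normalizer_le : sqrt (2 * PI) / Z <= / M.
Proof.
  pose proof normalizer_ge. pose proof normalizer_pos. pose proof sqrt_2PI_bounds.
  pose proof (exp_ineq1_le (3 * M ^ 2 - 1 / 2)).
  assert (3 * M <= Z) by nra.
  apply (Rmult_le_reg_r (M * Z)); [nra|].
  replace (sqrt (2 * PI) / Z * (M * Z)) with (sqrt (2 * PI) * M) by (field; lra).
  replace (/ M * (M * Z)) with Z by (field; lra).
  nra.
Qed.

Lemma tilted_continuous x : continuous (tilted M Z) x.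
Proof. apply continuous_Rmult; [apply continuous_const|apply tilt_continuous]. Qed.

Lemma tilted_pos x : 0 < tilted M Z x.
Proof.
  apply Rmult_lt_0_compat; [apply Rinv_0_lt_compat, normalizer_pos|apply tilt_pos].
Qed.

Lemma tilted_RInt_sup : is_RInt_sup (tilted M Z) 1.
Proof.
  pose proof normalizer_pos.
  replace 1 with (/ Z * Z) by (field; lra).
  apply is_RInt_sup_scal; [apply tilt_continuous|apply Rinv_0_lt_compat; lra|exact Z_sup].
Qed.

Lemma tilted_prob_density : is_prob_density (tilted M Z).
Proof.
  split; [intros; apply Rlt_le, tilted_pos|].
  apply is_RInt_R_sup; [apply tilted_RInt_sup|apply tilted_continuous|].
  intros; apply Rlt_le, tilted_pos.
Qed.

Lemma ln_tilted_derive x : is_derive (fun y => ln (tilted M Z y)) x (tilt_score M x).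
Proof.
  pose proof normalizer_pos.
  apply (is_derive_ext (fun y => ln (/ Z) + tilt_log M y)).
  - intros y. unfold tilted, tilt.
    rewrite ln_mult, ln_exp; [reflexivity|apply Rinv_0_lt_compat; lra|apply exp_pos].
  - replace (tilt_score M x) with (plus zero (tilt_score M x)) by (unfold plus, zero; simpl; ring).
    apply (is_derive_plus _ _ _ _ _ (is_derive_const (ln (/ Z)) x) (tilt_log_derive M x)).
Qed.

Lemma score_tilted x : score (tilted M Z) x = tilt_score M x.
Proof. apply is_derive_unique, ln_tilted_derive. Qed.

Lemma tilted_log_smooth : log_smooth 5 (tilted M Z).
Proof.
  split; [exact tilted_pos|split].
  - intros x. eexists. apply ln_tilted_derive.
  - intros x y. rewrite !score_tilted. apply tilt_score_Lipschitz.
Qed.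

Lemma tilted_score_div : exists d, score_div_is gauss (tilted M Z) d /\ d <= 64 / M.
Proof.
  destruct (ex_RInt_sup (score_gap_density M) (4 * (M ^ 2 + 2) * gauss_kernel M)) as [d Hd].
  { intros a b Hab. now apply RInt_score_gap_density_le. }
  exists d. split.
  - unfold score_div_is.
    replace (fun x => gauss x * (score gauss x - score (tilted M Z) x) ^ 2)
      with (score_gap_density M).
    + apply is_RInt_R_sup;
        [exact Hd|apply score_gap_density_continuous|apply score_gap_density_nonneg].
    + apply functional_extensionality. intros x.
      unfold score_gap_density. now rewrite score_gauss, score_tilted.
  - eapply Rle_trans; [|apply cubic_gauss_tail_le, M_ge1].
    apply (sup_le_RInt_bound _ _ Hd). intros a b Hab. now apply RInt_score_gap_density_le.
Qed.

Lemma tilted_tv : exists t, tv_is gauss (tilted M Z) t /\ 1 - 9 / M <= t.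
Proof.
  destruct (tv_ge_of_separated gauss (tilted M Z) M (sqrt (2 * PI) / Z) (8 * gauss_kernel M))
    as [t [Ht Hle]].
  - apply gauss_continuous.
  - apply tilted_continuous.
  - intros; apply Rlt_le, gauss_pos.
  - intros; apply Rlt_le, tilted_pos.
  - exact gauss_RInt_sup.
  - exact tilted_RInt_sup.
  - intros a Ha. unfold tilted. rewrite RInt_Rscal by apply tilt_continuous.
    pose proof (RInt_tilt_left M ltac:(lra) a Ha). pose proof normalizer_pos.
    unfold Rdiv. rewrite (Rmult_comm (sqrt (2 * PI))).
    apply Rmult_le_compat_l; [apply Rlt_le, Rinv_0_lt_compat|]; lra.
  - intros b Hb. pose proof (RInt_gauss_central M ltac:(lra)).
    pose proof (RInt_le_sup _ _ gauss_RInt_sup (- M) b ltac:(lra)).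
    rewrite <- (RInt_Chasles_R _ gauss_continuous (- M) M b) in *. lra.
  - exists t. split; [exact Ht|].
    pose proof sqrt_2PI_div_normalizer_le. pose proof (gauss_kernel_le_inv M M_ge1).
    replace (9 / M) with (8 * / M + / M) by (field; lra). lra.
Qed.

End TiltedDensity.

Lemma tilted_gaussian M : 1 <= M ->
  exists q, is_prob_density q /\ log_smooth 5 q /\
    (exists d, score_div_is gauss q d /\ d <= 64 / M) /\
    (exists t, tv_is gauss q t /\ 1 - 9 / M <= t).
Proof.
  intros HM.
  destruct (ex_RInt_sup (tilt M) _ (RInt_tilt_bounded M ltac:(lra))) as [Z HZ].
  exists (tilted M Z).
  split; [|split; [|split]].
  - now apply tilted_prob_density.
  - now apply tilted_log_smooth.
  - now apply tilted_score_div.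
  - now apply tilted_tv.
Qed.

Theorem theorem12 :
  exists C : R, forall eps : R, 0 < eps ->
    exists q : R -> R,
      is_prob_density q /\
      log_smooth C q /\
      (exists d, score_div_is gauss q d /\ d < eps) /\
      (exists t, tv_is gauss q t /\ t > 1 - eps).
Proof.
  exists 5. intros eps Heps.
  set (M := 1 + 64 / eps).
  assert (HM : 1 <= M) by (unfold M; pose proof (Rdiv_lt_0_compat 64 eps ltac:(lra) Heps); lra).
  assert (Hsmall : 64 / M < eps).
  { apply (Rmult_lt_reg_r M); [lra|].
    replace (64 / M * M) with 64 by (field; lra).
    unfold M. replace (eps * (1 + 64 / eps)) with (eps + 64) by (field; lra). lra. }
  destruct (tilted_gaussian M HM) as [q [Hq [Hsmooth [[d [Hd Hd_le]] [t [Ht Ht_ge]]]]]].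
  exists q. split; [exact Hq|split; [exact Hsmooth|split]].
  - exists d. split; [exact Hd|lra].
  - exists t. split; [exact Ht|].
    enough (9 / M < eps) by lra.
    eapply Rle_lt_trans; [|exact Hsmall]. unfold Rdiv. apply Rmult_le_compat_r; [|lra].
    apply Rlt_le, Rinv_0_lt_compat. lra.
Qed.
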